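(* Let $A$ be a primitive axial algebra of Jordan type $\tfrac12$ and let $a,b$ be distinct $\tfrac12$-axes. Assume $N_{a,b}$ is contained in a $3$-dimensional subalgebra $M$ of $A$ having an identity element $\mathbf e$. Then the following are equivalent: (a) $ab=-\tfrac38\mathbf e+\tfrac12a+\tfrac12b$; (b) $a^{\tau(b)}=b^{\tau(a)}$. If they hold, then $|\tau(a)\tau(b)|=3$; if moreover $\operatorname{char}\mathbb F\ne3$, then $\mathbf e$ is the identity element of $N_{a,b}$ (so $N_{a,b}=M$). Furthermore, if in addition $c:=\mathbf e-b$ is a $\tfrac12$-axis, then $N_{a,c}$ is $3$-dimensional and $ac=-\tfrac18\mathbf e+\tfrac12a+\tfrac12c$; when $\operatorname{char}\mathbb F\ne3$ one has $N_{a,c}=N_{a,b}$, while when $\operatorname{char}\mathbb F=3$ one has $N_{a,b}\subsetneq N_{a,c}$.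
   Context: $\mathbb F$ is a field of characteristic $\neq 2$. For a commutative $\mathbb F$-algebra $A$, $a\in A$, $\lambda\in\mathbb F$, put $A_\lambda(a)=\{x: xa=\lambda x\}$. A $\tfrac12$-axis is an idempotent $a$ with $A=A_1(a)\oplus A_0(a)\oplus A_{1/2}(a)$, $A_1(a)=\mathbb F a$, and with $A_+(a)=A_1(a)\oplus A_0(a)$, $A_-(a)=A_{1/2}(a)$ satisfying $A_+A_+\subseteq A_+$, $A_+A_-\subseteq A_-$, $A_-A_-\subseteq A_+$, $A_0(a)A_0(a)\subseteq A_0(a)$. A primitive axial algebra of Jordan type $\tfrac12$ is a commutative algebra generated by $\tfrac12$-axes. The Miyamoto involution $\tau(a)$ acts as $1$ on $A_+(a)$ and $-1$ on $A_-(a)$. $N_{x,y}$ is the subalgebra generated by $x,y$; an identity element of a subalgebra $N$ is $\mathbf 1\in N$ with $\mathbf 1n=n$ for all $n\in N$. *)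

From HB Require Import structures.
From mathcomp Require Import all_boot all_order all_algebra.
Set Implicit Arguments. Unset Strict Implicit. Unset Printing Implicit Defensive.
Import Order.TTheory GRing.Theory Num.Theory.
Local Open Scope ring_scope.

Section AxialDefs.
Variables (F : fieldType) (V : lmodType F) (mul : V -> V -> V).

Definition comm_algebra : Prop :=
  [/\ forall x y, mul x y = mul y x,
      forall x y z, mul x (y + z) = mul x y + mul x z &
      forall (k : F) x y, mul x (k *: y) = k *: mul x y].

Definition eig (a : V) (l : F) (x : V) : Prop := mul x a = l *: x.

Definition Aplus (a x : V) : Prop :=
  exists x1 x0, [/\ eig a 1 x1, eig a 0 x0 & x = x1 + x0].
Definition Aminus (a x : V) : Prop := eig a (2^-1) x.

Definition half_axis (a : V) : Prop :=
  [/\ mul a a = a,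
      (* A = A_1(a) + A_0(a) + A_{1/2}(a) (the sum of eigenspaces is automatically direct) *)
      forall x, exists x1 x0 xh,
        [/\ eig a 1 x1, eig a 0 x0, eig a (2^-1) xh & x = x1 + x0 + xh],
      forall x, eig a 1 x <-> exists k : F, x = k *: a &
      [/\ forall x y, Aplus a x -> Aplus a y -> Aplus a (mul x y),
          forall x y, Aplus a x -> Aminus a y -> Aminus a (mul x y),
          forall x y, Aminus a x -> Aminus a y -> Aplus a (mul x y) &
          forall x y, eig a 0 x -> eig a 0 y -> eig a 0 (mul x y)]].

Definition subalgebra (S : V -> Prop) : Prop :=
  [/\ S 0,
      forall x y, S x -> S y -> S (x + y),
      forall (k : F) x, S x -> S (k *: x) &
      forall x y, S x -> S y -> S (mul x y)].

Definition primitive_axial_half : Prop :=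
  forall S, subalgebra S -> (forall x, half_axis x -> S x) -> forall v, S v.

Definition Ngen (x y : V) (v : V) : Prop :=
  forall S, subalgebra S -> S x -> S y -> S v.

Definition dim3 (S : V -> Prop) : Prop :=
  exists m1 m2 m3, [/\ S m1, S m2, S m3,
    forall k1 k2 k3 : F, k1 *: m1 + k2 *: m2 + k3 *: m3 = 0 ->
        [/\ k1 = 0, k2 = 0 & k3 = 0] &
    forall v, S v -> exists k1 k2 k3 : F, v = k1 *: m1 + k2 *: m2 + k3 *: m3].

(* t is the Miyamoto involution tau(a): 1 on A_+(a), -1 on A_-(a).
   Since A = A_+(a) + A_-(a) for a 1/2-axis, this determines t uniquely. *)
Definition miyamoto (a : V) (t : V -> V) : Prop :=
  forall xp xm, Aplus a xp -> Aminus a xm -> t (xp + xm) = xp - xm.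

Definition is_identity_of (S : V -> Prop) (e : V) : Prop :=
  S e /\ forall n, S n -> mul e n = n.

End AxialDefs.

Definition has_order (T : Type) (f : T -> T) (n : nat) : Prop :=
  [/\ (0 < n)%N, forall x, iter n f x = x &
      forall m, (0 < m < n)%N -> exists x, iter m f x <> x].

From HB Require Import structures.
From mathcomp Require Import all_boot all_order all_algebra.
From mathcomp Require Import ring.
Import Order.TTheory GRing.Theory Num.Theory.
Local Open Scope ring_scope.
Set Implicit Arguments. Unset Strict Implicit. Unset Printing Implicit Defensive.

(* Write b = k a + b0 + bh with b0, bh in the 0- and 1/2-eigenspaces of a.
   Since tau(a) x = x - 8 xa + 8 (xa)a, condition (b) says
   a + 8 (ab)b = b + 8 (ab)a, and as (ab)a = 1/2 ab + k/2 a this forces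
   k = 1/4 unless a and b are proportional, which idempotence rules out.
   Inside the 3-dimensional algebra M the vectors a, e - a, bh are nonzero
   eigenvectors for distinct eigenvalues, hence a basis, so b0 = y (e - a);
   the 1/2-component of b^2 = b then gives y = 3/4, which is exactly the
   product rule (a).  Under (a), a, b, e are independent and span a subalgebra; it
   is N_{a,e-b} because e = 8 (a/2 + c/2 - ac) for c = e - b, and it is
   N_{a,b} when 3 <> 0 because then e = 8/3 (a/2 + b/2 - ab).  When 3 = 0 the
   rule reads ab = a/2 + b/2, so N_{a,b} = span(a, b) misses e.  Finally
   tau(b) tau(a) tau(b) and tau(a) tau(b) tau(a) are both the Miyamoto
   involution of tau(b)(a) = tau(a)(b), which makes tau(a) tau(b) of order 3. *)

Section Coordinates.
Variables (F : fieldType) (V : lmodType F) (s : seq V).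

Definition lincomb (k : nat -> F) : V := \sum_(i < size s) k i *: s`_i.

Lemma lincomb0 : 0 = lincomb (fun=> 0).
Proof. by rewrite /lincomb big1 // => i _; rewrite scale0r. Qed.

Lemma lincombD k l : lincomb k + lincomb l = lincomb (fun i => k i + l i).
Proof. by rewrite /lincomb -big_split; apply: eq_bigr => i _; rewrite scalerDl. Qed.

Lemma lincombZ c k : c *: lincomb k = lincomb (fun i => c * k i).
Proof. by rewrite /lincomb scaler_sumr; apply: eq_bigr => i _; rewrite scalerA. Qed.

Lemma lincombN k : - lincomb k = lincomb (fun i => - k i).
Proof. by rewrite -scaleN1r lincombZ; apply: eq_bigr => i _; rewrite mulN1r. Qed.

Lemma lincomb_nth i : (i < size s)%N -> s`_i = lincomb (fun j => (j == i)%:R).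
Proof.
move=> lt_is; rewrite /lincomb (bigD1 (Ordinal lt_is)) //= eqxx scale1r.
by rewrite big1 ?addr0 // => j; rewrite -val_eqE /= => /negPf->; rewrite scale0r.
Qed.

Lemma eq_lincomb k l :
  [seq k i | i <- iota 0 (size s)] = [seq l i | i <- iota 0 (size s)] ->
  lincomb k = lincomb l.
Proof.
move=> eq_kl; apply: eq_bigr => i _; congr (_ *: _).
have := congr1 (nth 0 ^~ i) eq_kl.
by rewrite !(nth_map 0%N) ?size_iota // nth_iota // add0n.
Qed.

End Coordinates.

Ltac rewrite_coords s l i :=
  lazymatch l with
  | ?u :: ?l' =>
      try rewrite -[u]/(s`_i) (lincomb_nth (s := s) (i := i) isT);
      rewrite_coords s l' i.+1
  | _ => idtac
  end.

(* [lincomb_eq [:: u_0; ...; u_n]] reduces an identity between linear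
   combinations of the u_i to the equality of their coefficients; compound
   vectors such as [e - a] must be listed before the vectors they contain. *)
Ltac lincomb_eq l :=
  let s := fresh "s" in
  pose s := l;
  rewrite_coords s l 0%N;
  rewrite ?[0 in LHS](lincomb0 s) ?[0 in RHS](lincomb0 s);
  rewrite ?(lincombD, lincombZ, lincombN);
  apply: eq_lincomb; rewrite /s /=;
  repeat congr (_ :: _).

Lemma pow2_neq0 (F : fieldType) (n : nat) : (2 : F) != 0 -> (2 ^ n)%:R != 0 :> F.
Proof. by move=> two_neq0; rewrite natrX expf_neq0. Qed.

Ltac field_pow2 :=
  field; repeat (apply/andP; split);
  try by [ assumption | apply: (pow2_neq0 1) | apply: (pow2_neq0 2) | apply: (pow2_neq0 3)
         | apply: (pow2_neq0 4) | apply: (pow2_neq0 6) ].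

Section Span.
Variables (F : fieldType) (V : lmodType F).

Lemma span_dependent (m n : nat) (w : 'I_m -> V) (u : 'I_n -> V) :
  (m < n)%N -> (forall i, exists c : 'rV[F]_m, u i = \sum_j c 0 j *: w j) ->
  exists2 k : 'rV[F]_n, k != 0 & \sum_i k 0 i *: u i = 0.
Proof.
move=> lt_mn /fin_all_exists[c Du].
pose C := \matrix_(i, j) c i 0 j.
have : kermx C != 0.
  rewrite kermx_eq0 /row_free; apply: contraTneq (rank_leq_col C) => ->.
  by rewrite -ltnNge.
case/rowV0Pn => k /sub_kermxP kC nz_k; exists k => //.
under eq_bigr do rewrite Du scaler_sumr.
rewrite exchange_big big1 // => j _.
have := congr1 (fun A : 'M_(1, m) => A 0 j) kC; rewrite !mxE => kCj.
rewrite -[RHS](scale0r (w j)) -kCj scaler_suml.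
by apply: eq_bigr => i _; rewrite mxE scalerA.
Qed.

Lemma scaler_injl (x : V) : x != 0 -> injective ( *:%R^~ x : F -> V).
Proof.
move=> nz_x k l /eqP; rewrite -subr_eq0 -scalerBl scaler_eq0 (negPf nz_x) orbF.
by rewrite subr_eq0 => /eqP.
Qed.

Lemma scaler_eq0l (x : V) (k : F) : x != 0 -> k *: x = 0 -> k = 0.
Proof. by move=> nz_x; rewrite -(scale0r x) => /(scaler_injl nz_x). Qed.

Definition free3 (u1 u2 u3 : V) := forall k1 k2 k3 : F,
  k1 *: u1 + k2 *: u2 + k3 *: u3 = 0 -> [/\ k1 = 0, k2 = 0 & k3 = 0].

Definition span3 (u1 u2 u3 v : V) :=
  exists k1 k2 k3 : F, v = k1 *: u1 + k2 *: u2 + k3 *: u3.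

Lemma row3_sum (m1 m2 m3 : V) (k1 k2 k3 : F) :
  k1 *: m1 + k2 *: m2 + k3 *: m3 =
  \sum_(j < 3) (\row_j [:: k1; k2; k3]`_j) 0 j *: [:: m1; m2; m3]`_j.
Proof. by rewrite !big_ord_recl big_ord0 !mxE /= addr0 addrA. Qed.

Lemma dim3_free_span (S : V -> Prop) (u1 u2 u3 : V) :
  dim3 S -> S u1 -> S u2 -> S u3 -> free3 u1 u2 u3 ->
  forall v, S v -> span3 u1 u2 u3 v.
Proof.
case=> m1 [m2 [m3 [_ _ _ _ spanS]]] Su1 Su2 Su3 free_u v Sv.
have [|k nz_k] := @span_dependent 3 4
    (nth 0 [:: m1; m2; m3]) (nth 0 [:: v; u1; u2; u3]) isT.
  move=> i; have [k1 [k2 [k3 ->]]] : exists k1 k2 k3 : F,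
      [:: v; u1; u2; u3]`_i = k1 *: m1 + k2 *: m2 + k3 *: m3.
    by apply: spanS; case: i => [[|[|[|[|]]]]].
  by exists (\row_j [:: k1; k2; k3]`_j); rewrite row3_sum.
rewrite !big_ord_recl big_ord0 /= addr0 !addrA.
set k0 := k 0 ord0 => dep.
have [k0_0 | nz_k0] := eqVneq k0 0.
  move: dep; rewrite k0_0 scale0r add0r => /free_u [k1_0 k2_0 k3_0].
  case/negP: nz_k; apply/eqP/rowP => -[[|[|[|[|//]]]] lti]; rewrite mxE.
  - by rewrite -k0_0 /k0; congr (k _ _); apply: val_inj.
  - by rewrite -k1_0; congr (k _ _); apply: val_inj.
  - by rewrite -k2_0; congr (k _ _); apply: val_inj.
  - by rewrite -k3_0; congr (k _ _); apply: val_inj.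
exists (- k 0 (lift ord0 ord0) / k0), (- k 0 (lift ord0 (lift ord0 ord0)) / k0),
  (- k 0 (lift ord0 (lift ord0 (lift ord0 ord0))) / k0).
apply: (scalerI nz_k0); move/eqP: dep; rewrite -!addrA addr_eq0 => /eqP ->.
by rewrite !scalerDr !scalerA !(mulrC k0) !divfK // !scaleNr !opprD.
Qed.

Section Span3Closure.
Variables u1 u2 u3 : V.

Lemma span3_1 : span3 u1 u2 u3 u1.
Proof. by exists 1, 0, 0; rewrite scale1r !scale0r !addr0. Qed.
Lemma span3_2 : span3 u1 u2 u3 u2.
Proof. by exists 0, 1, 0; rewrite scale1r !scale0r add0r addr0. Qed.
Lemma span3_3 : span3 u1 u2 u3 u3.
Proof. by exists 0, 0, 1; rewrite scale1r !scale0r !add0r. Qed.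
Lemma span3D x y : span3 u1 u2 u3 x -> span3 u1 u2 u3 y -> span3 u1 u2 u3 (x + y).
Proof.
move=> [k1 [k2 [k3 ->]]] [l1 [l2 [l3 ->]]]; exists (k1 + l1), (k2 + l2), (k3 + l3).
by rewrite !scalerDl addrACA -!addrA (addrCA (l1 *: u1)) (addrCA (l2 *: u2)).
Qed.
Lemma span3Z c x : span3 u1 u2 u3 x -> span3 u1 u2 u3 (c *: x).
Proof.
move=> [k1 [k2 [k3 ->]]]; exists (c * k1), (c * k2), (c * k3).
by rewrite !scalerDr !scalerA.
Qed.
Lemma span3N x : span3 u1 u2 u3 x -> span3 u1 u2 u3 (- x).
Proof. by rewrite -scaleN1r; apply: span3Z. Qed.

End Span3Closure.

End Span.

Ltac span3_closure :=
  repeat first [ apply: span3D | apply: span3N | apply: span3Z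
               | apply: span3_1 | apply: span3_2 | apply: span3_3 ].

Section CommAlgebra.
Variables (F : fieldType) (V : lmodType F) (mul : V -> V -> V).
Hypothesis mul_comm_alg : comm_algebra mul.

Lemma mulaC x y : mul x y = mul y x. Proof. by case: mul_comm_alg. Qed.
Lemma mulaDr x y z : mul x (y + z) = mul x y + mul x z.
Proof. by case: mul_comm_alg. Qed.
Lemma mulaZr k x y : mul x (k *: y) = k *: mul x y.
Proof. by case: mul_comm_alg. Qed.
Lemma mulaDl x y z : mul (y + z) x = mul y x + mul z x.
Proof. by rewrite !(mulaC _ x) mulaDr. Qed.
Lemma mulaZl k x y : mul (k *: y) x = k *: mul y x.
Proof. by rewrite !(mulaC _ x) mulaZr. Qed.
Lemma mula0 x : mul x 0 = 0.
Proof. by rewrite -(scale0r 0) mulaZr !scale0r. Qed.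
Lemma mul0a x : mul 0 x = 0.
Proof. by rewrite mulaC mula0. Qed.
Lemma mulaNr x y : mul x (- y) = - mul x y.
Proof. by rewrite -scaleN1r mulaZr scaleN1r. Qed.
Lemma mulaNl x y : mul (- y) x = - mul y x.
Proof. by rewrite -scaleN1r mulaZl scaleN1r. Qed.
Lemma mulaBr x y z : mul x (y - z) = mul x y - mul x z.
Proof. by rewrite mulaDr mulaNr. Qed.
Lemma mulaBl x y z : mul (y - z) x = mul y x - mul z x.
Proof. by rewrite mulaDl mulaNl. Qed.

Lemma idempotent_scale x q : mul x x = x -> x != 0 ->
  mul (q *: x) (q *: x) = q *: x -> q = 0 \/ q = 1.
Proof.
move=> xx nz_x; rewrite mulaZl mulaZr xx scalerA => /eqP.
rewrite -subr_eq0 -scalerBl scaler_eq0 (negPf nz_x) orbF.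
have -> : q * q - q = q * (q - 1) by ring.
by rewrite mulf_eq0 subr_eq0 => /orP[]/eqP; [left | right].
Qed.

Section Subalgebra.
Variable S : V -> Prop.
Hypothesis S_subalg : subalgebra mul S.

Lemma subalg0 : S 0. Proof. by case: S_subalg. Qed.
Lemma subalgD x y : S x -> S y -> S (x + y).
Proof. by case: S_subalg => _ + _ _; apply. Qed.
Lemma subalgZ k x : S x -> S (k *: x).
Proof. by case: S_subalg => _ _ + _; apply. Qed.
Lemma subalgM x y : S x -> S y -> S (mul x y).
Proof. by case: S_subalg => _ _ _; apply. Qed.
Lemma subalgN x : S x -> S (- x).
Proof. by rewrite -scaleN1r; apply: subalgZ. Qed.
Lemma subalgB x y : S x -> S y -> S (x - y).
Proof. by move=> Sx Sy; apply: subalgD => //; apply: subalgN. Qed.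

End Subalgebra.

Ltac subalg_closure S_sub gen :=
  repeat first [ solve [gen] | apply: (subalgD S_sub) | apply: (subalgN S_sub)
               | apply: (subalgZ S_sub) | apply: (subalgM S_sub) ].

Lemma Ngen_subalgebra x y : subalgebra mul (Ngen mul x y).
Proof.
split=> [S S_sub _ _ | u v Nu Nv S S_sub Sx Sy | k u Nu S S_sub Sx Sy
        | u v Nu Nv S S_sub Sx Sy].
- exact: subalg0.
- by apply: subalgD => //; [apply: Nu | apply: Nv].
- by apply: subalgZ => //; apply: Nu.
- by apply: subalgM => //; [apply: Nu | apply: Nv].
Qed.

Lemma Ngen_l x y : Ngen mul x y x. Proof. by move=> S _ Sx. Qed.
Lemma Ngen_r x y : Ngen mul x y y. Proof. by move=> S _ _ Sy. Qed.

Lemma span3_min u1 u2 u3 S : subalgebra mul S -> S u1 -> S u2 -> S u3 ->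
  forall v, span3 u1 u2 u3 v -> S v.
Proof.
move=> S_sub S1 S2 S3 v [k1 [k2 [k3 ->]]].
by repeat apply: (subalgD S_sub); apply: (subalgZ S_sub).
Qed.

Lemma span3_subalgebra u1 u2 u3 :
  (forall x y, x \in [:: u1; u2; u3] -> y \in [:: u1; u2; u3] ->
     span3 u1 u2 u3 (mul x y)) ->
  subalgebra mul (span3 u1 u2 u3).
Proof.
move=> span_mul; split.
- by exists 0, 0, 0; rewrite !scale0r !addr0.
- exact: span3D.
- exact: span3Z.
move=> x y [k1 [k2 [k3 ->]]] [l1 [l2 [l3 ->]]].
rewrite !(mulaDl, mulaDr, mulaZl, mulaZr).
by span3_closure; apply: span_mul; rewrite !inE eqxx ?orbT.
Qed.

Lemma eig0 a l : eig mul a l 0. Proof. by rewrite /eig mul0a scaler0. Qed.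
Lemma eigD a l x y : eig mul a l x -> eig mul a l y -> eig mul a l (x + y).
Proof. by rewrite /eig mulaDl scalerDr => -> ->. Qed.
Lemma eigZ a l k x : eig mul a l x -> eig mul a l (k *: x).
Proof. by rewrite /eig mulaZl => ->; rewrite !scalerA mulrC. Qed.
Lemma eigB a l x y : eig mul a l x -> eig mul a l y -> eig mul a l (x - y).
Proof. by move=> Ex Ey; apply: eigD => //; rewrite -scaleN1r; apply: eigZ. Qed.

Lemma Aplus_eig1 a x : eig mul a 1 x -> Aplus mul a x.
Proof. by move=> Ex; exists x, 0; rewrite addr0; split => //; apply: eig0. Qed.
Lemma Aplus_eig0 a x : eig mul a 0 x -> Aplus mul a x.
Proof. by move=> Ex; exists 0, x; rewrite add0r; split => //; apply: eig0. Qed.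
Lemma AplusD a x y : Aplus mul a x -> Aplus mul a y -> Aplus mul a (x + y).
Proof.
move=> [x1 [x0 [Ex1 Ex0 ->]]] [y1 [y0 [Ey1 Ey0 ->]]].
by exists (x1 + y1), (x0 + y0); rewrite addrACA; split => //; apply: eigD.
Qed.
Lemma AplusZ a k x : Aplus mul a x -> Aplus mul a (k *: x).
Proof.
move=> [x1 [x0 [Ex1 Ex0 ->]]].
by exists (k *: x1), (k *: x0); rewrite scalerDr; split => //; apply: eigZ.
Qed.

Section Transport.
Variable g : V -> V.
Hypotheses (gD : forall x y, g (x + y) = g x + g y)
  (gZ : forall k x, g (k *: x) = k *: g x)
  (gM : forall x y, g (mul x y) = mul (g x) (g y)).

Lemma eig_transport a l x : eig mul a l x -> eig mul (g a) l (g x).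
Proof. by rewrite /eig -gM => ->; rewrite gZ. Qed.

Lemma Aplus_transport a x : Aplus mul a x -> Aplus mul (g a) (g x).
Proof.
move=> [x1 [x0 [Ex1 Ex0 ->]]].
by exists (g x1), (g x0); rewrite gD; split => //; apply: eig_transport.
Qed.

End Transport.

Section CharNot2.
Hypothesis two_neq0 : (2 : F) != 0.

Lemma eig_sum_eq0 a x1 x0 xh : eig mul a 1 x1 -> eig mul a 0 x0 ->
  eig mul a (2^-1) xh -> x1 + x0 + xh = 0 -> [/\ x1 = 0, x0 = 0 & xh = 0].
Proof.
move=> Ex1 Ex0 Exh sum0.
have sum1 : x1 + 2^-1 *: xh = 0.
  by have := congr1 (mul^~ a) sum0; rewrite !mulaDl Ex1 Ex0 Exh mul0a scale1r scale0r addr0.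
have sum2 : x1 + 4^-1 *: xh = 0.
  have := congr1 (mul^~ a) sum1; rewrite mulaDl mulaZl Ex1 Exh mul0a scale1r scalerA.
  by rewrite -invfM -natrM.
have xh0 : xh = 0.
  have : 4^-1 *: xh = (x1 + 2^-1 *: xh) - (x1 + 4^-1 *: xh).
    by lincomb_eq [:: x1; xh]; field_pow2.
  rewrite sum1 sum2 subrr => /eqP.
  by rewrite scaler_eq0 invr_eq0 (negPf (pow2_neq0 2 two_neq0)) => /eqP.
by move: sum1 sum0; rewrite xh0 scaler0 !addr0 => ->; rewrite add0r.
Qed.

Lemma eig_sum_inj a x1 x0 xh y1 y0 yh :
  eig mul a 1 x1 -> eig mul a 0 x0 -> eig mul a (2^-1) xh ->
  eig mul a 1 y1 -> eig mul a 0 y0 -> eig mul a (2^-1) yh ->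
  x1 + x0 + xh = y1 + y0 + yh -> [/\ x1 = y1, x0 = y0 & xh = yh].
Proof.
move=> Ex1 Ex0 Exh Ey1 Ey0 Eyh /eqP; rewrite -subr_eq0 => /eqP eq0.
have sum0 : x1 - y1 + (x0 - y0) + (xh - yh) = 0.
  by rewrite -eq0; lincomb_eq [:: x1; x0; xh; y1; y0; yh]; ring.
by case: (eig_sum_eq0 (eigB Ex1 Ey1) (eigB Ex0 Ey0) (eigB Exh Eyh) sum0)
  => /subr0_eq-> /subr0_eq-> /subr0_eq->.
Qed.

Lemma eig_free3 a x1 x0 xh : eig mul a 1 x1 -> eig mul a 0 x0 ->
  eig mul a (2^-1) xh -> x1 != 0 -> x0 != 0 -> xh != 0 -> free3 x1 x0 xh.
Proof.
move=> Ex1 Ex0 Exh nz1 nz0 nzh k1 k0 kh sum0.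
have [] := eig_sum_eq0 (eigZ k1 Ex1) (eigZ k0 Ex0) (eigZ kh Exh) sum0.
by move=> /(scaler_eq0l nz1) -> /(scaler_eq0l nz0) -> /(scaler_eq0l nzh) ->.
Qed.

Section HalfAxis.
Variable a : V.
Hypothesis a_half : half_axis mul a.

Lemma half_axis_idem : mul a a = a. Proof. by case: a_half. Qed.

Lemma eig1_axis : eig mul a 1 a.
Proof. by rewrite /eig half_axis_idem scale1r. Qed.

Lemma eig1_axisP x : eig mul a 1 x -> exists k, x = k *: a.
Proof. by case: a_half => _ _ /(_ x)[]. Qed.

Lemma half_axis_decomp x : exists k x0 xh,
  [/\ eig mul a 0 x0, eig mul a (2^-1) xh & x = k *: a + x0 + xh].
Proof.
case: a_half => _ /(_ x)[x1 [x0 [xh [/eig1_axisP[k ->] Ex0 Exh ->]]]] _ _.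
by exists k, x0, xh.
Qed.

Lemma mul_axis_decomp k x0 xh : eig mul a 0 x0 -> eig mul a (2^-1) xh ->
  mul (k *: a + x0 + xh) a = k *: a + 2^-1 *: xh.
Proof.
by move=> Ex0 Exh; rewrite !mulaDl mulaZl half_axis_idem Ex0 Exh scale0r addr0.
Qed.

Lemma pm_decomp x : exists p m, [/\ Aplus mul a p, Aminus mul a m & x = p + m].
Proof.
case: a_half => _ /(_ x)[x1 [x0 [xh [Ex1 Ex0 Exh ->]]]] _ _.
by exists (x1 + x0), xh; split => //; exists x1, x0.
Qed.

Section Miyamoto.
Variable t : V -> V.
Hypothesis t_miyamoto : miyamoto mul a t.

Lemma miyamoto_Aplus x : Aplus mul a x -> t x = x.
Proof. by move=> Ex; have := t_miyamoto Ex (eig0 a _); rewrite !addr0 subr0. Qed.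

Lemma miyamoto_Aminus x : Aminus mul a x -> t x = - x.
Proof.
move=> Ex; have := t_miyamoto (Aplus_eig0 (eig0 a 0)) Ex.
by rewrite !add0r.
Qed.

Lemma miyamotoD x y : t (x + y) = t x + t y.
Proof.
have [p [m [Ep Em ->]]] := pm_decomp x; have [p' [m' [Ep' Em' ->]]] := pm_decomp y.
have Epp' := AplusD Ep Ep'; have Emm' := eigD Em Em'.
by rewrite addrACA !t_miyamoto // opprD addrACA.
Qed.

Lemma miyamotoZ k x : t (k *: x) = k *: t x.
Proof.
have [p [m [Ep Em ->]]] := pm_decomp x.
have Ekp := AplusZ k Ep; have Ekm := eigZ k Em.
by rewrite scalerDr !t_miyamoto // scalerBr.
Qed.

Lemma miyamotoN x : t (- x) = - t x.
Proof. by rewrite -scaleN1r miyamotoZ scaleN1r. Qed.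

Lemma miyamotoK x : t (t x) = x.
Proof.
have [p [m [Ep Em ->]]] := pm_decomp x.
by rewrite t_miyamoto // miyamotoD miyamotoN miyamoto_Aplus // miyamoto_Aminus // !opprK.
Qed.

Lemma miyamotoM x y : t (mul x y) = mul (t x) (t y).
Proof.
case: a_half => _ _ _ [PP PM MM _].
have [p [m [Ep Em ->]]] := pm_decomp x; have [p' [m' [Ep' Em' ->]]] := pm_decomp y.
rewrite !t_miyamoto // !(mulaDl, mulaDr, mulaNl, mulaNr) !miyamotoD !(mulaC m p').
rewrite (miyamoto_Aplus (PP _ _ Ep Ep')) (miyamoto_Aplus (MM _ _ Em Em')).
rewrite (miyamoto_Aminus (PM _ _ Ep Em')) (miyamoto_Aminus (PM _ _ Ep' Em)).
by lincomb_eq [:: mul p p'; mul p m'; mul p' m; mul m m']; ring.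
Qed.

Lemma miyamotoE x : t x = x - 8 *: mul x a + 8 *: mul (mul x a) a.
Proof.
have [k [x0 [xh [Ex0 Exh ->]]]] := half_axis_decomp x.
have Ep : Aplus mul a (k *: a + x0).
  exact: AplusD (AplusZ k (Aplus_eig1 eig1_axis)) (Aplus_eig0 Ex0).
rewrite t_miyamoto // mul_axis_decomp // mulaDl !mulaZl half_axis_idem Exh scalerA.
by lincomb_eq [:: a; x0; xh]; field_pow2.
Qed.

End Miyamoto.

Lemma mul_axis_twice y k y0 yh : eig mul a 0 y0 -> eig mul a (2^-1) yh ->
  y = k *: a + y0 + yh -> mul (mul a y) a = 2^-1 *: mul a y + (k / 2) *: a.
Proof.
move=> Ey0 Eyh ->; rewrite (mulaC a) mul_axis_decomp //.
rewrite mulaDl !mulaZl half_axis_idem Eyh scalerA.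
by lincomb_eq [:: a; yh]; field_pow2.
Qed.

Lemma eig_components_in S y k y0 yh : subalgebra mul S -> S a -> S y ->
  eig mul a 0 y0 -> eig mul a (2^-1) yh -> y = k *: a + y0 + yh -> S y0 /\ S yh.
Proof.
move=> S_sub Sa Sy Ey0 Eyh Ey.
have Syh : S yh.
  have -> : yh = 4 *: (mul y a - mul (mul y a) a).
    rewrite Ey mul_axis_decomp // mulaDl !mulaZl half_axis_idem Eyh scalerA.
    by lincomb_eq [:: a; yh]; field_pow2.
  apply: (subalgZ S_sub); apply: (subalgB S_sub); by repeat apply: (subalgM S_sub).
split=> //; have -> : y0 = y - k *: a - yh.
  by rewrite Ey; lincomb_eq [:: a; y0; yh]; ring.
by apply: (subalgB S_sub) => //; apply: (subalgB S_sub) => //; apply: (subalgZ S_sub).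
Qed.

Lemma idempotent_half_component y k y0 yh : mul y y = y ->
  eig mul a 0 y0 -> eig mul a (2^-1) yh -> y = k *: a + y0 + yh ->
  k *: yh + 2 *: mul y0 yh = yh.
Proof.
move=> yy Ey0 Eyh Ey; case: a_half => _ _ _ [_ PM MM ZZ].
have [x1 [x0 [Ex1 Ex0 Eyhyh]]] := MM _ _ Eyh Eyh.
have Eyy : (k ^+ 2 *: a + x1) + (mul y0 y0 + x0) + (k *: yh + 2 *: mul y0 yh) =
           k *: a + y0 + yh.
  rewrite -[in RHS]Ey -[in RHS]yy Ey !(mulaDl, mulaDr, mulaZl, mulaZr).
  rewrite half_axis_idem (mulaC a y0) Ey0 (mulaC a yh) Eyh (mulaC yh y0) Eyhyh.
  by lincomb_eq [:: mul y0 y0; mul y0 yh; a; y0; yh; x1; x0]; field_pow2.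
have [] // := eig_sum_inj _ _ _ _ Ey0 Eyh Eyy.
- exact: eigD (eigZ _ eig1_axis) Ex1.
- exact: eigD (ZZ _ _ Ey0 Ey0) Ex0.
- exact: eigD (eigZ _ Eyh) (eigZ _ (PM _ _ (Aplus_eig0 Ey0) Eyh)).
- exact: eigZ _ eig1_axis.
Qed.

End HalfAxis.

Lemma miyamoto_unique c t t' :
  (forall x, exists p m, [/\ Aplus mul c p, Aminus mul c m & x = p + m]) ->
  miyamoto mul c t -> miyamoto mul c t' -> forall x, t x = t' x.
Proof. by move=> dec Ht Ht' x; have [p [m [Ep Em ->]]] := dec x; rewrite Ht // Ht'. Qed.

Section MiyamotoConjugate.
Variables (a b : V) (ta tb : V -> V).
Hypotheses (a_half : half_axis mul a) (b_half : half_axis mul b)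
  (ta_miyamoto : miyamoto mul a ta) (tb_miyamoto : miyamoto mul b tb).

Let tbD := miyamotoD b_half tb_miyamoto.
Let tbZ := miyamotoZ b_half tb_miyamoto.
Let tbM := miyamotoM b_half tb_miyamoto.
Let tbK := miyamotoK b_half tb_miyamoto.

Lemma pm_decomp_conj x :
  exists p m, [/\ Aplus mul (tb a) p, Aminus mul (tb a) m & x = p + m].
Proof.
have [p [m [Ep Em Ex]]] := pm_decomp a_half (tb x).
exists (tb p), (tb m); split.
- exact: Aplus_transport Ep.
- exact: eig_transport Em.
- by rewrite -tbD -Ex tbK.
Qed.

Lemma miyamoto_conj : miyamoto mul (tb a) (tb \o ta \o tb).
Proof.
move=> p m Ep Em /=; rewrite -[a]tbK in Ep Em.
have Ep' := Aplus_transport tbD tbZ tbM Ep; have Em' := eig_transport tbZ tbM Em.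
rewrite !tbK in Ep' Em'.
by rewrite tbD ta_miyamoto // tbD (miyamotoN b_half tb_miyamoto) !tbK.
Qed.

End MiyamotoConjugate.

Lemma miyamoto_braid a b ta tb : half_axis mul a -> half_axis mul b ->
  miyamoto mul a ta -> miyamoto mul b tb -> tb a = ta b ->
  forall x, tb (ta (tb x)) = ta (tb (ta x)).
Proof.
move=> Ha Hb Hta Htb swap; apply: (miyamoto_unique (c := tb a)).
- exact: pm_decomp_conj Ha Hb Htb.
- exact: miyamoto_conj Hb Hta Htb.
- by rewrite swap; apply: miyamoto_conj Ha Htb Hta.
Qed.

Lemma miyamoto_order3 a b ta tb : half_axis mul a -> half_axis mul b ->
  miyamoto mul a ta -> miyamoto mul b tb -> a != b -> tb a = ta b ->
  has_order (ta \o tb) 3.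
Proof.
move=> Ha Hb Hta Htb neq_ab swap; split=> // [x | [|[|[|m]]] //= _].
- by rewrite /= (miyamoto_braid Ha Hb Hta Htb swap) !(miyamotoK Ha Hta, miyamotoK Hb Htb).
- exists a; rewrite swap (miyamotoK Ha Hta) => eq_ba.
  by rewrite eq_ba eqxx in neq_ab.
- exists b; rewrite (miyamoto_Aplus Htb (Aplus_eig1 (eig1_axis Hb))) -swap.
  rewrite (miyamotoK Hb Htb) (miyamoto_Aplus Hta (Aplus_eig1 (eig1_axis Ha))).
  by move=> eq_ab; rewrite eq_ab eqxx in neq_ab.
Qed.

Section TwoAxes.
Variables (a b e : V) (M : V -> Prop) (ta tb : V -> V).
Hypotheses (a_half : half_axis mul a) (b_half : half_axis mul b) (neq_ab : a != b)
  (ta_miyamoto : miyamoto mul a ta) (tb_miyamoto : miyamoto mul b tb)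
  (M_subalg : subalgebra mul M) (M_dim3 : dim3 M)
  (Nab_M : forall v, Ngen mul a b v -> M v) (e_identity : is_identity_of mul M e).

Lemma Ma : M a. Proof. by apply: Nab_M; apply: Ngen_l. Qed.
Lemma Mb : M b. Proof. by apply: Nab_M; apply: Ngen_r. Qed.
Lemma Me : M e. Proof. by case: e_identity. Qed.
Lemma mul_identity x : M x -> mul e x = x. Proof. by case: e_identity => _; apply. Qed.

Lemma eig0_identityB : eig mul a 0 (e - a).
Proof. by rewrite /eig mulaBl (mul_identity Ma) half_axis_idem // subrr scale0r. Qed.

Lemma miyamoto_swapE :
  tb a = ta b <-> a + 8 *: mul (mul a b) b = b + 8 *: mul (mul a b) a.
Proof.
rewrite (miyamotoE b_half tb_miyamoto) (miyamotoE a_half ta_miyamoto) (mulaC b a).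
rewrite (addrAC a) (addrAC b); split=> [|-> //].
exact: addIr.
Qed.

Lemma swap_of_prod : mul a b = - (3 / 8) *: e + 2^-1 *: a + 2^-1 *: b ->
  tb a = ta b.
Proof.
move=> ab_prod; apply/miyamoto_swapE; rewrite ab_prod !(mulaDl, mulaZl).
rewrite (mul_identity Ma) (mul_identity Mb) !half_axis_idem // (mulaC b a) ab_prod.
by lincomb_eq [:: a; b; e]; field_pow2.
Qed.

Lemma swap_neq0 : tb a = ta b -> a != 0 /\ b != 0.
Proof.
move/miyamoto_swapE => swap.
by split; apply/eqP => z; move: swap neq_ab;
  rewrite z !(mul0a, mula0, scaler0, addr0, add0r) => ->; rewrite eqxx.
Qed.

Section Decomposition.
Variables (k : F) (b0 bh : V).
Hypotheses (Eb0 : eig mul a 0 b0) (Ebh : eig mul a (2^-1) bh)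
  (Eb : b = k *: a + b0 + bh) (swap : tb a = ta b).

Lemma swap_coef : k = 4^-1.
Proof.
have [nz_a nz_b] := swap_neq0 swap.
have [l [a0 [ah [Ea0 Eah Ea]]]] := half_axis_decomp b_half a.
move/miyamoto_swapE: swap.
rewrite (mul_axis_twice a_half Eb0 Ebh Eb) (mulaC a b).
rewrite (mul_axis_twice b_half Ea0 Eah Ea) (mulaC b a) => swap'.
have prop : (1 - 4 * k) *: a = (1 - 4 * l) *: b.
  apply/eqP; rewrite -subr_eq0; apply/eqP.
  have -> : (1 - 4 * k) *: a - (1 - 4 * l) *: b =
      a + 8 *: (2^-1 *: mul a b + (l / 2) *: b)
      - (b + 8 *: (2^-1 *: mul a b + (k / 2) *: a)).
    by lincomb_eq [:: mul a b; a; b]; field_pow2.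
  by rewrite swap' subrr.
have [k_quarter | nz_k] := eqVneq (1 - 4 * k) 0.
  have -> : k = 4^-1 * (1 - (1 - 4 * k)) by field_pow2.
  by rewrite k_quarter subr0 mulr1.
pose q := (1 - 4 * l) / (1 - 4 * k).
have Eaq : a = q *: b by rewrite /q mulrC -scalerA -prop scalerA mulVf // scale1r.
have : mul (q *: b) (q *: b) = q *: b by rewrite -Eaq half_axis_idem.
case/(idempotent_scale (half_axis_idem b_half) nz_b) => [q0 | q1].
- by rewrite Eaq q0 scale0r eqxx in nz_a.
- by move: neq_ab; rewrite Eaq q1 scale1r eqxx.
Qed.

Lemma swap_bh_neq0 : bh != 0.
Proof.
apply/eqP => bh0; have [nz_a nz_b] := swap_neq0 swap.
have ab_eq : mul a b = k *: a.
  by rewrite mulaC Eb mul_axis_decomp // bh0 scaler0 addr0.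
move/miyamoto_swapE: swap; rewrite ab_eq !mulaZl ab_eq (half_axis_idem a_half).
move=> swap'.
pose c := 1 + 8 * k ^+ 2 - 8 * k.
have Eba : b = c *: a.
  have -> : b = b + 8 *: (k *: a) - 8 *: (k *: a) by rewrite addrK.
  by rewrite -swap' /c; lincomb_eq [:: a]; ring.
have : mul (c *: a) (c *: a) = c *: a by rewrite -Eba half_axis_idem.
case/(idempotent_scale (half_axis_idem a_half) nz_a) => [c0 | c1].
- by rewrite Eba c0 scale0r eqxx in nz_b.
- by move: neq_ab; rewrite Eba c1 scale1r eqxx.
Qed.

Lemma swap_e_neq_a : e - a != 0.
Proof.
apply/eqP => /subr0_eq e_eq_a.
have := mul_axis_decomp a_half k Eb0 Ebh.
rewrite -Eb mulaC -[a in mul a b]e_eq_a (mul_identity Mb) => Eb'.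
have Ea1 := eigZ k (eig1_axis a_half).
have : k *: a + b0 + bh = k *: a + 0 + 2^-1 *: bh by rewrite addr0 -Eb' -Eb.
case/(eig_sum_inj Ea1 Eb0 Ebh Ea1 (eig0 a 0) (eigZ _ Ebh)) => _ _ bh_half.
have : (1 - 2^-1) *: bh = 0 by rewrite scalerBl scale1r -bh_half subrr.
move/(scaler_eq0l swap_bh_neq0)/eqP; apply/negP.
have -> : (1 - 2^-1 : F) = 2^-1 by field_pow2.
by rewrite invr_eq0.
Qed.

Lemma swap_b0 : b0 = (3 / 4) *: (e - a).
Proof.
have [nz_a _] := swap_neq0 swap.
have [Mb0 Mbh] := eig_components_in a_half M_subalg Ma Mb Eb0 Ebh Eb.
have Mea : M (e - a) := subalgB M_subalg Me Ma.
have free := eig_free3 (eig1_axis a_half) eig0_identityB Ebh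
  nz_a swap_e_neq_a swap_bh_neq0.
have [x [y [z Eb0xyz]]] := dim3_free_span M_dim3 Ma Mea Mbh free Mb0.
have : 0 + b0 + 0 = x *: a + y *: (e - a) + z *: bh by rewrite add0r addr0.
case/(eig_sum_inj (eig0 a 1) Eb0 (eig0 a _) (eigZ x (eig1_axis a_half))
  (eigZ y eig0_identityB) (eigZ z Ebh)) => _ b0y _.
have := idempotent_half_component a_half (half_axis_idem b_half) Eb0 Ebh Eb.
rewrite b0y mulaZl mulaBl (mul_identity Mbh) (mulaC a) Ebh => half_eq.
have : (k + y) *: bh = 1 *: bh.
  by rewrite scale1r -[in RHS]half_eq; lincomb_eq [:: bh]; field_pow2.
move/(scaler_injl swap_bh_neq0) => ky; congr (_ *: _).
have -> : y = (k + y) - k by ring.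
by rewrite ky swap_coef; field_pow2.
Qed.

Lemma prod_of_swap : mul a b = - (3 / 8) *: e + 2^-1 *: a + 2^-1 *: b.
Proof.
have Ebh' : bh = b - k *: a - b0 by rewrite Eb; lincomb_eq [:: a; b0; bh]; ring.
rewrite mulaC {1}Eb mul_axis_decomp // Ebh' swap_b0 swap_coef scalerBr.
by lincomb_eq [:: a; b; e]; field_pow2.
Qed.

Lemma swap_free_abe : free3 a b e.
Proof.
have [nz_a _] := swap_neq0 swap.
move=> x y z sum0.
have free := eig_free3 (eig1_axis a_half) eig0_identityB Ebh nz_a swap_e_neq_a
  swap_bh_neq0.
have [] := free (x + y / 4 + z) (3 * y / 4 + z) y.
  by rewrite -sum0 Eb swap_b0 swap_coef !scalerBr; lincomb_eq [:: a; e; bh]; field_pow2.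
move=> c1 c2 y0; rewrite y0 in c1 c2.
have z0 : z = 0 by rewrite -c2; ring.
by split=> //; rewrite -c1 z0; ring.
Qed.

End Decomposition.

Lemma prod_iff_swap :
  mul a b = - (3 / 8) *: e + 2^-1 *: a + 2^-1 *: b <-> tb a = ta b.
Proof.
split=> [|swap]; first exact: swap_of_prod.
have [k [b0 [bh [Eb0 Ebh Eb]]]] := half_axis_decomp a_half b.
exact: prod_of_swap Eb0 Ebh Eb swap.
Qed.

Section ProductRule.
Hypothesis ab_prod : mul a b = - (3 / 8) *: e + 2^-1 *: a + 2^-1 *: b.

Lemma prod_free_abe : free3 a b e.
Proof.
have [k [b0 [bh [Eb0 Ebh Eb]]]] := half_axis_decomp a_half b.
exact: swap_free_abe Eb0 Ebh Eb (swap_of_prod ab_prod).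
Qed.

Lemma span_abe_subalgebra : subalgebra mul (span3 a b e).
Proof.
apply: span3_subalgebra => x y; rewrite !inE.
move=> /or3P[]/eqP-> /or3P[]/eqP->;
  rewrite ?(mulaC b a) ?(mulaC a e) ?(mulaC b e) ?ab_prod;
  rewrite ?(half_axis_idem a_half) ?(half_axis_idem b_half);
  rewrite ?(mul_identity Ma) ?(mul_identity Mb) ?(mul_identity Me);
  span3_closure.
Qed.

Lemma M_sub_span v : M v -> span3 a b e v.
Proof. exact: dim3_free_span M_dim3 Ma Mb Me prod_free_abe v. Qed.

Lemma Ngen_ab_sub_span v : Ngen mul a b v -> span3 a b e v.
Proof. by apply; [exact: span_abe_subalgebra | exact: span3_1 | exact: span3_2]. Qed.

Lemma e_in_Ngen_ab : (3 : F) != 0 -> Ngen mul a b e.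
Proof.
move=> three_neq0.
have Ee : e = (8 / 3) *: (2^-1 *: a + 2^-1 *: b - mul a b).
  by rewrite ab_prod; lincomb_eq [:: a; b; e]; field_pow2.
rewrite [X in Ngen _ _ _ X]Ee.
by subalg_closure (Ngen_subalgebra a b) ltac:(first [exact: Ngen_l | exact: Ngen_r]).
Qed.

Lemma Ngen_ab_spanE : (3 : F) != 0 -> forall v, Ngen mul a b v <-> span3 a b e v.
Proof.
move=> three_neq0 v; split; first exact: Ngen_ab_sub_span.
exact: span3_min (Ngen_subalgebra a b) (@Ngen_l a b) (@Ngen_r a b)
  (e_in_Ngen_ab three_neq0) v.
Qed.

Lemma prod_a_eb : mul a (e - b) = - (1 / 8) *: e + 2^-1 *: a + 2^-1 *: (e - b).
Proof.
rewrite mulaBr (mulaC a e) (mul_identity Ma) ab_prod.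
by rewrite !scalerBr; lincomb_eq [:: a; b; e]; field_pow2.
Qed.

Lemma Ngen_aeb_spanE v : Ngen mul a (e - b) v <-> span3 a b e v.
Proof.
have N_sub := Ngen_subalgebra a (e - b).
have Ne : Ngen mul a (e - b) e.
  have Ee : e = 8 *: (2^-1 *: a + 2^-1 *: (e - b) - mul a (e - b)).
    by rewrite prod_a_eb !scalerBr; lincomb_eq [:: a; b; e]; field_pow2.
  rewrite [X in Ngen _ _ _ X]Ee.
  by subalg_closure N_sub ltac:(first [exact: Ngen_l | exact: Ngen_r]).
have Nb : Ngen mul a (e - b) b.
  have Eb : e - (e - b) = b by rewrite opprB addrC subrK.
  rewrite -[X in Ngen _ _ _ X]Eb.
  by subalg_closure N_sub ltac:(first [exact: Ne | exact: Ngen_r]).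
split; last exact: span3_min N_sub (@Ngen_l a (e - b)) Nb Ne v.
by apply; [exact: span_abe_subalgebra | exact: span3_1 | span3_closure].
Qed.

Lemma e_notin_Ngen_ab : (3 : F) = 0 -> ~ Ngen mul a b e.
Proof.
move=> three0 Ne.
have ab_sum : mul a b = 2^-1 *: a + 2^-1 *: b.
  by rewrite ab_prod three0 mul0r oppr0 scale0r add0r.
have span_ab : subalgebra mul (span3 a b 0).
  apply: span3_subalgebra => x y; rewrite !inE.
  move=> /or3P[]/eqP-> /or3P[]/eqP->; rewrite ?mula0 ?mul0a ?(mulaC b a) ?ab_sum;
    rewrite ?(half_axis_idem a_half) ?(half_axis_idem b_half); span3_closure.
have [x [y [z Ee]]] : span3 a b 0 e by apply: Ne => //; span3_closure.
have : x *: a + y *: b + (-1) *: e = 0.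
  by rewrite Ee scaler0 addr0; lincomb_eq [:: a; b]; ring.
by case/prod_free_abe => _ _ /eqP; rewrite oppr_eq0 oner_eq0.
Qed.

End ProductRule.
End TwoAxes.
End CharNot2.
End CommAlgebra.

Unset Implicit Arguments.

Theorem lemma3p20 (F : fieldType) (V : lmodType F) (mul : V -> V -> V)
    (a b e : V) (M : V -> Prop) (ta tb : V -> V) :
  (2 : F) != 0 ->
  comm_algebra mul ->
  primitive_axial_half mul ->
  half_axis mul a -> half_axis mul b -> a != b ->
  miyamoto mul a ta -> miyamoto mul b tb ->
  subalgebra mul M -> dim3 M ->
  (forall v, Ngen mul a b v -> M v) ->
  is_identity_of mul M e ->
  (mul a b = - (3 / 8) *: e + 2^-1 *: a + 2^-1 *: b <-> tb a = ta b) /\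
  (mul a b = - (3 / 8) *: e + 2^-1 *: a + 2^-1 *: b ->
    [/\ has_order (ta \o tb) 3,
        (3 : F) != 0 ->
          is_identity_of mul (Ngen mul a b) e /\ (forall v, Ngen mul a b v <-> M v) &
        half_axis mul (e - b) ->
          [/\ dim3 (Ngen mul a (e - b)),
              mul a (e - b) = - (1 / 8) *: e + 2^-1 *: a + 2^-1 *: (e - b),
              (3 : F) != 0 -> forall v, Ngen mul a (e - b) v <-> Ngen mul a b v &
              (3 : F) = 0 ->
                (forall v, Ngen mul a b v -> Ngen mul a (e - b) v) /\
                exists v, Ngen mul a (e - b) v /\ ~ Ngen mul a b v]]).
Proof.
move=> two_neq0 mul_comm _ Ha Hb neq_ab Hta Htb M_sub M_dim3 Nab_M e_id.
have prod_swap :=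
  prod_iff_swap mul_comm two_neq0 Ha Hb neq_ab Hta Htb M_sub M_dim3 Nab_M e_id.
split=> // ab_prod.
have swap : tb a = ta b by apply/prod_swap.
have free_abe := prod_free_abe mul_comm two_neq0 Ha Hb neq_ab Hta Htb
  M_sub M_dim3 Nab_M e_id ab_prod.
have M_span := M_sub_span mul_comm two_neq0 Ha Hb neq_ab Hta Htb
  M_sub M_dim3 Nab_M e_id ab_prod.
have Nab_span := Ngen_ab_sub_span mul_comm Ha Hb Nab_M e_id ab_prod.
have Nab_iff := Ngen_ab_spanE mul_comm two_neq0 Ha Hb Nab_M e_id ab_prod.
have Naeb_span := Ngen_aeb_spanE mul_comm two_neq0 Ha Hb Nab_M e_id ab_prod.
split=> [|three_neq0|_].
- exact: (miyamoto_order3 mul_comm Ha Hb Hta Htb neq_ab swap).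
- split; last by move=> v; split=> [/Nab_M // | /M_span /(Nab_iff three_neq0)].
  split; first exact: (e_in_Ngen_ab two_neq0 ab_prod three_neq0).
  by move=> n /Nab_M; case: e_id => _; apply.
split.
- exists a, b, e; split=> //; rewrite ?Naeb_span; try span3_closure.
  by move=> v /Naeb_span.
- exact: (prod_a_eb mul_comm two_neq0 Nab_M e_id ab_prod).
- by move=> three_neq0 v; rewrite Naeb_span Nab_iff.
move=> three0; split; first by move=> v /Nab_span /Naeb_span.
exists e; split; first by apply/Naeb_span; span3_closure.
exact: (e_notin_Ngen_ab mul_comm two_neq0 Ha Hb neq_ab Hta Htb
  M_sub M_dim3 Nab_M e_id ab_prod three0).
Qed.
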